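(* Let $w\in S_\infty$ and $i\ge1$ with $l(ws_i)=l(w)-1$, and let $D\in\mathcal P(w)$. If $\mathrm{mitosis}_i(D)\neq\emptyset$, then either $\mathrm{mitosis}_i(D)\subseteq\mathcal P(ws_i)$ or $\mathrm{mitosis}_i(D)\subseteq\mathcal P(w)$.
   Context: Permutations: $S_\infty=\bigcup_n S_n$ is generated by the simple transpositions $s_a=(a\ a{+}1)$, $a\ge 1$; $l(w)$ is the Coxeter length of $w$. A pipe dream is a finite subset $D\subset\mathbb{Z}_{>0}\times\mathbb{Z}_{>0}$; its elements $(r,c)$ are called crosses (in row $r$, column $c$). The reading word of $D$ is obtained by listing the crosses row by row from top to bottom, within each row from right to left (decreasing $c$), and recording for each cross $(r,c)$ its antidiagonal index $r+c-1$; this gives a word $(a_1,\dots,a_k)$. For $u\in S_\infty$ put $u\star s_a=us_a$ if $l(us_a)=l(u)+1$ and $u\star s_a=u$ otherwise. The Demazure product of $D$ is $\delta(D)=(\cdots((e\star s_{a_1})\star s_{a_2})\cdots)\star s_{a_k}$. For $w\in S_\infty$, $\mathcal P(w)=\{D:\delta(D)=w\}$. Mitosis: for a pipe dream $D$ and row index $i$, let $\mathrm{start}_i(D)=\min\{c\ge 1:(i,c)\notin D\}$ and $\mathcal J_i(D)=\{c<\mathrm{start}_i(D): (i+1,c)\notin D\}$. For $p\in\mathcal J_i(D)$ let $D_p=\big(D\setminus(\{(i,p)\}\cup\{(i,c):c\in\mathcal J_i(D),c<p\})\big)\cup\{(i+1,c):c\in\mathcal J_i(D),c<p\}$ (delete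 $(i,p)$ and move each cross $(i,c)$, $c\in\mathcal J_i(D)$, $c<p$, down to $(i+1,c)$). Then $\mathrm{mitosis}_i(D)=\{D_p:p\in\mathcal J_i(D)\}$ (empty if $\mathcal J_i(D)=\emptyset$). *)

From mathcomp Require Import all_boot.
Set Implicit Arguments. Unset Strict Implicit. Unset Printing Implicit Defensive.

(* ---------- Elements of S_infinity ----------
   A permutation w of Z_{>0} fixing all but finitely many points is encoded by
   its one-line notation [:: w(1); ...; w(n)] with all trailing fixed points
   removed (so Leibniz equality of encodings = equality of permutations);
   w(k) = k for k > n. *)

Definition is_sinf (w : seq nat) : bool :=
  perm_eq w (iota 1 (size w)) && ((w == [::]) || (last 0 w != size w)).

Definition pv (w : seq nat) (x : nat) : nat :=
  if (0 < x) && (x <= size w) then nth 0 w x.-1 else x.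

Definition sw (a x : nat) : nat :=
  if x == a then a.+1 else if x == a.+1 then a else x.

Fixpoint trimn (n : nat) (s : seq nat) : seq nat :=
  if n is m.+1 then (if nth 0 s m == n then trimn m s else take n s) else [::].
Definition trim (s : seq nat) : seq nat := trimn (size s) s.

Definition rmul (w : seq nat) (a : nat) : seq nat :=
  trim (mkseq (fun k => pv w (sw a k.+1)) (maxn (size w) a.+1)).

(* Coxeter length = number of inversions: pairs of positions i < j with w(i) > w(j) *)
Definition len (w : seq nat) : nat :=
  sumn [seq count (fun i => nth 0 w j < nth 0 w i) (iota 0 j)
       | j <- iota 0 (size w)].

Definition dstar (u : seq nat) (a : nat) : seq nat :=
  if len (rmul u a) == (len u).+1 then rmul u a else u.

(* ---------- Pipe dreams ----------
   A pipe dream is a finite subset of Z_{>0} x Z_{>0}, encoded as a list of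
   crosses (r, c); only membership matters. *)

Definition pipe_dream (D : seq (nat * nat)) : bool :=
  all (fun x => (0 < x.1) && (0 < x.2)) D.

Definition maxrow (D : seq (nat * nat)) : nat := foldr maxn 0 (map fst D).
Definition maxcol (D : seq (nat * nat)) : nat := foldr maxn 0 (map snd D).

Definition reading_word (D : seq (nat * nat)) : seq nat :=
  flatten [seq [seq r + c - 1 | c <- rev (iota 1 (maxcol D)) & (r, c) \in D]
          | r <- iota 1 (maxrow D)].

Definition demazure (D : seq (nat * nat)) : seq nat :=
  foldl dstar [::] (reading_word D).

Definition start (i : nat) (D : seq (nat * nat)) : nat :=
  (find (fun k => (i, k.+1) \notin D) (iota 0 (size D).+1)).+1.

Definition Jset (i : nat) (D : seq (nat * nat)) : seq nat :=
  [seq c <- iota 1 (start i D).-1 | (i.+1, c) \notin D].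

Definition Dp (i : nat) (D : seq (nat * nat)) (p : nat) : seq (nat * nat) :=
  [seq x <- D | (x != (i, p)) &&
                ~~ [&& x.1 == i, x.2 \in Jset i D & x.2 < p]]
  ++ [seq (i.+1, c) | c <- Jset i D & c < p].

Definition mitosis (i : nat) (D : seq (nat * nat)) : seq (seq (nat * nat)) :=
  [seq Dp i D p | p <- Jset i D].

From mathcomp Require Import all_boot zify.
From Stdlib Require Import FunctionalExtensionality.
Set Implicit Arguments. Unset Strict Implicit. Unset Printing Implicit Defensive.

(* The Demazure product acts on one-line notations by the 0-Hecke rule
   u * s_a = u s_a if u(a) < u(a+1) and u otherwise, and this action satisfies the
   commutation and braid relations.  Mitosis only changes rows i and i+1 in the columns
   before start_i(D), where row i of D is full; braid moves through that full run show
   that, up to these relations, the reading word of D is the reading word of any D_p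
   followed by the letter i, and that all D_p have equivalent reading words.  Hence all
   D_p share one Demazure product g and w = g * s_i, so either w = g s_i, i.e.
   g = w s_i, or w = g. *)

Lemma swL a : sw a a = a.+1. Proof. by rewrite /sw eqxx. Qed.

Lemma swR a : sw a a.+1 = a.
Proof. by rewrite /sw eqxx; case: ifP => //; lia. Qed.

Lemma swD a x : x != a -> x != a.+1 -> sw a x = x.
Proof. by rewrite /sw => /negPf -> /negPf ->. Qed.

Lemma swP a x : [\/ x = a /\ sw a x = a.+1, x = a.+1 /\ sw a x = a |
   [/\ x != a, x != a.+1 & sw a x = x]].
Proof.
case: (eqVneq x a) => [->|xa]; first by constructor 1; rewrite swL.
case: (eqVneq x a.+1) => [->|xa1]; first by constructor 2; rewrite swR.
by constructor 3; rewrite swD.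
Qed.

Lemma swK a : involutive (sw a).
Proof. by move=> x; case: (swP a x) => [[-> ->]|[-> ->]|[_ _ e]]; rewrite ?swL ?swR ?e ?e. Qed.

Lemma sw_gt0 a x : 0 < a -> 0 < x -> 0 < sw a x.
Proof. by case: (swP a x) => [[-> ->]|[-> ->]|[_ _ ->]]. Qed.

Lemma sw_ltn a x N : x < N.+1 -> a.+1 <= N -> sw a x < N.+1.
Proof. by case: (swP a x) => [[-> ->]|[-> ->]|[_ _ ->]]; lia. Qed.

(** * The 0-Hecke action on one-line functions *)

Definition hecke_step (f : nat -> nat) (a : nat) : nat -> nat :=
  fun x => if f a < f a.+1 then f (sw a x) else f x.

Definition hecke_act (f : nat -> nat) (l : seq nat) : nat -> nat :=
  foldl hecke_step f l.

Definition hecke_eq (l1 l2 : seq nat) : Prop :=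
  forall f, hecke_act f l1 = hecke_act f l2.

Lemma hecke_act_cat f l1 l2 :
  hecke_act f (l1 ++ l2) = hecke_act (hecke_act f l1) l2.
Proof. exact: foldl_cat. Qed.

Lemma hecke_eq_sym l1 l2 : hecke_eq l1 l2 -> hecke_eq l2 l1.
Proof. by move=> h f. Qed.

Lemma hecke_eq_trans l2 l1 l3 : hecke_eq l1 l2 -> hecke_eq l2 l3 -> hecke_eq l1 l3.
Proof. by move=> h12 h23 f; rewrite h12. Qed.

Lemma hecke_eq_cat2l s l1 l2 : hecke_eq l1 l2 -> hecke_eq (s ++ l1) (s ++ l2).
Proof. by move=> h f; rewrite !hecke_act_cat h. Qed.

Lemma hecke_eq_cat2r s l1 l2 : hecke_eq l1 l2 -> hecke_eq (l1 ++ s) (l2 ++ s).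
Proof. by move=> h f; rewrite !hecke_act_cat h. Qed.

Lemma hecke_eq_cons x l1 l2 : hecke_eq l1 l2 -> hecke_eq (x :: l1) (x :: l2).
Proof. exact: (hecke_eq_cat2l [:: x]). Qed.

Lemma hecke_comm a b : a.+1 < b -> hecke_eq [:: a; b] [:: b; a].
Proof.
move=> ab f; rewrite /hecke_act /= /hecke_step; apply: functional_extensionality => x.
have e1 : sw a b = b by rewrite swD //; lia.
have e2 : sw a b.+1 = b.+1 by rewrite swD //; lia.
have e3 : sw b a = a by rewrite swD //; lia.
have e4 : sw b a.+1 = a.+1 by rewrite swD //; lia.
rewrite e1 e2 e3 e4 !if_same.
case: (f a < f a.+1); case: (f b < f b.+1) => //.
case: (swP a x) => [[-> ->]|[-> ->]|[_ _ ea]]; first by rewrite e3 swL e4.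
  by rewrite e4 swR e3.
by rewrite ea; case: (swP b x) => [[-> ->]|[-> ->]|[_ _ ->]]; rewrite ?e1 ?e2 ?ea.
Qed.

Lemma hecke_braid k : hecke_eq [:: k.+1; k; k.+1] [:: k; k.+1; k].
Proof.
move=> f; rewrite /hecke_act /= /hecke_step; apply: functional_extensionality => x.
have r1 : sw k k.+2 = k.+2 by rewrite swD //; lia.
have r2 : sw k.+1 k = k by rewrite swD //; lia.
rewrite !(swL, swR, r1, r2) !if_same.
have [->|[->|[->|[e1 e2]]]] : x = k \/ x = k.+1 \/ x = k.+2 \/
   (sw k x = x /\ sw k.+1 x = x).
  case: (swP k x) => [[-> _]|[-> _]|[_ _ e1]]; [by left|by right; left|].
  case: (swP k.+1 x) => [[-> _]|[-> _]|[_ _ e2]]; [by right; left|by do 2 right; left|].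
  by do 3 right.
- by rewrite !(swL, swR, r1, r2); do ! case: ifP => //=; lia.
- by rewrite !(swL, swR, r1, r2); do ! case: ifP => //=; lia.
- by rewrite !(swL, swR, r1, r2); do ! case: ifP => //=; lia.
by rewrite !(e1, e2); do ! case: ifP => //=; lia.
Qed.

Definition distant (x y : nat) : bool := (x.+1 < y) || (y.+1 < x).

Lemma distantC x y : distant x y = distant y x.
Proof. by rewrite /distant orbC. Qed.

Lemma hecke_comm_distant a b : distant a b -> hecke_eq [:: a; b] [:: b; a].
Proof. by case/orP => h; [apply: hecke_comm|apply/hecke_eq_sym/hecke_comm]. Qed.

Lemma hecke_comm_letter a Y : {in Y, forall y, distant a y} ->
  hecke_eq (a :: Y) (Y ++ [:: a]).
Proof.
elim: Y => [|y Y IH] aY //=.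
apply: (@hecke_eq_trans [:: y, a & Y]).
  by apply: (hecke_eq_cat2r Y (hecke_comm_distant _)); apply: aY; rewrite inE eqxx.
by apply/hecke_eq_cons/IH => z zY; apply: aY; rewrite inE zY orbT.
Qed.

Lemma hecke_comm_cat X Y : {in X & Y, forall x y, distant x y} ->
  hecke_eq (X ++ Y) (Y ++ X).
Proof.
elim: X => [|x X IH] XY /=; first by rewrite cats0.
apply: (@hecke_eq_trans (x :: (Y ++ X))).
  by apply/hecke_eq_cons/IH => a b aX bY; apply: XY; rewrite ?inE ?aX ?orbT.
rewrite -cat1s catA -cat_rcons -cats1.
by apply/hecke_eq_cat2r/hecke_comm_letter => y yY; apply: XY; rewrite ?inE ?eqxx.
Qed.

Definition down (a n : nat) : seq nat := rev (iota a n).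

Lemma mem_down x a n : (x \in down a n) = (a <= x < a + n).
Proof. by rewrite mem_rev mem_iota. Qed.

Lemma down_cat a m n : down a (m + n) = down (a + m) n ++ down a m.
Proof. by rewrite /down iotaD rev_cat. Qed.

Lemma downSl a n : down a n.+1 = down a.+1 n ++ [:: a].
Proof. by rewrite /down /= rev_cons cats1. Qed.

Lemma downSr a n : down a n.+1 = (a + n) :: down a n.
Proof. by rewrite -addn1 down_cat /down /= -?addn1. Qed.

Lemma map_addn_down t a n : map (fun c => t + c) (down a n) = down (t + a) n.
Proof. by rewrite map_rev -iotaDl. Qed.

Lemma map_succ_down a n : map succn (down a n) = down a.+1 n.
Proof. exact: (map_addn_down 1). Qed.

Lemma map_addSn_down t a n : map (fun c => (t + c).+1) (down a n) = down (t + a).+1 n.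
Proof. by rewrite -addSn -map_addn_down. Qed.

(* A letter k+1 crosses a decreasing run through k+1, k by one braid move, leaving as k. *)
Lemma hecke_down_shift a n k : a <= k -> k.+2 <= a + n ->
  hecke_eq (down a n ++ [:: k.+1]) (k :: down a n).
Proof.
move=> ak kn.
have -> : down a n = down k.+2 (n - (k - a) - 2) ++ [:: k.+1; k] ++ down a (k - a).
  have en : n = (k - a) + (2 + (n - (k - a) - 2)) by lia.
  have ak' : a + (k - a) = k by lia.
  by rewrite {1}en !down_cat -catA ak' addn2.
rewrite /= -!catA /=.
set H := down k.+2 _; set L := down a (k - a).
have farL : {in L, forall x, distant k.+1 x}.
  by move=> x; rewrite mem_down /distant; lia.
have farH : {in H, forall x, distant k x}.
  by move=> x; rewrite mem_down /distant; lia.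
apply: (@hecke_eq_trans (H ++ [:: k.+1, k, k.+1 & L])).
  by apply/hecke_eq_cat2l/hecke_eq_cons/hecke_eq_cons/hecke_eq_sym/hecke_comm_letter.
apply: (@hecke_eq_trans (H ++ [:: k, k.+1, k & L])).
  exact/hecke_eq_cat2l/(hecke_eq_cat2r L (hecke_braid k)).
have -> : H ++ [:: k, k.+1, k & L] = (H ++ [:: k]) ++ [:: k.+1, k & L] by rewrite -catA.
have -> : k :: H ++ [:: k.+1, k & L] = ([:: k] ++ H) ++ [:: k.+1, k & L] by [].
exact/hecke_eq_cat2r/hecke_eq_sym/hecke_comm_letter.
Qed.

Lemma hecke_down_shift_seq a n L : {in L, forall x, a <= x /\ x.+2 <= a + n} ->
  hecke_eq (down a n ++ map succn L) (L ++ down a n).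
Proof.
elim: L => [|x L IH] hL /=; first by rewrite cats0.
apply: (@hecke_eq_trans ((x :: down a n) ++ map succn L)); last first.
  by apply/hecke_eq_cons/IH => y yL; apply: hL; rewrite inE yL orbT.
rewrite -cat1s catA; apply: hecke_eq_cat2r.
by have [ax xn] := hL x (mem_head _ _); exact: hecke_down_shift.
Qed.

Lemma hecke_down_pass B m X : {in X & down B m.+1, forall x y, distant x y} ->
  hecke_eq (down B m.+1 ++ X ++ down B.+1 m) (down B m ++ X ++ down B m.+1).
Proof.
move=> farX.
have farX' : {in X & down B.+1 m, forall x y, distant x y}.
  by move=> x y xX; rewrite mem_down => yB; apply: farX => //; rewrite mem_down; lia.
apply: (@hecke_eq_trans (down B m.+1 ++ down B.+1 m ++ X)).
  exact/hecke_eq_cat2l/hecke_comm_cat.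
apply: (@hecke_eq_trans ((down B m ++ down B m.+1) ++ X)); last first.
  by rewrite -catA; apply/hecke_eq_cat2l/hecke_comm_cat => x y xB yX; rewrite distantC farX.
rewrite catA; apply: hecke_eq_cat2r.
by rewrite -map_succ_down; apply: hecke_down_shift_seq => x; rewrite mem_down; lia.
Qed.

(** * Two rows of a pipe dream under mitosis *)

(* The reading word of rows t+1 and t+2 restricted to the columns 1..n, with crosses P and Q. *)
Definition two_row_word (t n : nat) (P Q : pred nat) : seq nat :=
  map (fun c => t + c) (filter P (down 1 n)) ++
  map (fun c => (t + c).+1) (filter Q (down 1 n)).

(* Rows i and i+1 of D_p in the columns < start_i(D), when K is row i+1 of D. *)
Definition mitosis_row (K : pred nat) (p : nat) : pred nat :=
  fun c => (p < c) || (c < p) && K c.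

Definition mitosis_next_row (K : pred nat) (p : nat) : pred nat :=
  fun c => (c < p) || K c.

Lemma down_splitAt a n x : a <= x < a + n ->
  down a n = down x.+1 (a + n - x.+1) ++ x :: down a (x - a).
Proof.
move=> xn; rewrite {1}(_ : n = (x - a) + (1 + (a + n - x.+1))); last by lia.
by rewrite !down_cat downSl -catA /= (_ : a + (x - a) = x) 1?addn1 //; lia.
Qed.

Lemma down1_split p n : 0 < p <= n -> down 1 n = down p.+1 (n - p) ++ p :: down 1 p.-1.
Proof. by move=> pn; rewrite (down_splitAt (x := p)) ?add1n ?subSS ?subn1 //; lia. Qed.

Lemma filter_down_eq (P Q : pred nat) a n :
  (forall c, a <= c < a + n -> P c = Q c) -> filter P (down a n) = filter Q (down a n).
Proof. by move=> PQ; apply: eq_in_filter => c; rewrite mem_down; apply: PQ. Qed.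

Lemma mitosis_wordE t n K p : 0 < p <= n -> ~~ K p ->
  two_row_word t n (mitosis_row K p) (mitosis_next_row K p) =
  map (fun c => t + c) (down p.+1 (n - p)) ++
  map (fun c => t + c) (filter K (down 1 p.-1)) ++
  map (fun c => (t + c).+1) (filter K (down p.+1 (n - p))) ++
  map (fun c => (t + c).+1) (down 1 p.-1).
Proof.
move=> pn nKp; rewrite /two_row_word (down1_split pn) !filter_cat /=.
rewrite /mitosis_row /mitosis_next_row ltnn (negPf nKp) /= !map_cat -!catA.
rewrite [filter _ (down p.+1 _)](@filter_down_eq _ predT) ?filter_predT;
  last by move=> c hc; case: ltngtP => //; lia.
rewrite [filter _ (down 1 _)](@filter_down_eq _ K);
  last by move=> c hc; case: ltngtP => //; lia.
rewrite [filter (fun c => _ || K _) (down p.+1 _)](@filter_down_eq _ K);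
  last by move=> c hc; case: ltngtP => //; lia.
rewrite [filter (fun c => _ || K _) (down 1 _)](@filter_down_eq _ predT) ?filter_predT //.
by move=> c hc; case: ltngtP => //; lia.
Qed.

Lemma mem_map_filter (f : nat -> nat) (P : pred nat) l x :
  x \in map f (filter P l) -> exists2 c, c \in l & x = f c.
Proof. by case/mapP => c; rewrite mem_filter => /andP [_ cl] ->; exists c. Qed.

(* In D row i is the full run t+n, ..., t+1 on these columns; sliding the letters of row i+1
   through it by braid moves leaves the word of D_p followed by t+1. *)
Lemma two_row_word_mitosis t n K p : 0 < p <= n -> ~~ K p ->
  hecke_eq (two_row_word t n predT K)
    (two_row_word t n (mitosis_row K p) (mitosis_next_row K p) ++ [:: t.+1]).
Proof.
move=> pn nKp; rewrite mitosis_wordE // /two_row_word filter_predT (down1_split pn).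
rewrite filter_cat /= (negPf nKp) !map_cat /= -!catA.
have p0 : 0 < p by case/andP: pn.
set Hi := down p.+1 _; set Lo := down 1 p.-1.
set FK := map (fun c => t + c) (filter K Lo).
set GH := map (fun c => (t + c).+1) (filter K Hi).
set SK := map (fun c => (t + c).+1) (filter K Lo).
have eSK : SK = map succn FK by rewrite /SK /FK -map_comp.
have eC : t + p :: map (fun c => t + c) Lo = down t.+1 p.
  by rewrite map_addn_down -{3}(prednK p0) downSr addn1 addSnnS prednK.
have eC' : down t.+1 p = down t.+2 p.-1 ++ [:: t.+1] by rewrite -{1}(prednK p0) downSl.
have eL : map (fun c => (t + c).+1) Lo = down t.+2 p.-1 by rewrite map_addSn_down addn1.
rewrite eC eL -eC'.
have farGS : {in GH & SK, forall x y, distant x y}.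
  move=> x y /mem_map_filter [c + ->] /mem_map_filter [d + ->].
  by rewrite !mem_down /distant; lia.
have farCG : {in down t.+1 p & GH, forall x y, distant x y}.
  move=> x y + /mem_map_filter [d + ->].
  by rewrite !mem_down /distant; lia.
apply: (@hecke_eq_trans (_ ++ down t.+1 p ++ SK ++ GH)).
  exact/hecke_eq_cat2l/hecke_eq_cat2l/hecke_comm_cat.
apply: (@hecke_eq_trans (_ ++ FK ++ down t.+1 p ++ GH)).
  apply: hecke_eq_cat2l; rewrite !catA; apply: hecke_eq_cat2r.
  rewrite eSK; apply: hecke_down_shift_seq => x /mem_map_filter [c + ->].
  by rewrite mem_down; lia.
exact/hecke_eq_cat2l/hecke_eq_cat2l/hecke_comm_cat.
Qed.

Lemma mitosis_word_step t n K p q : 0 < p -> p < q <= n -> ~~ K p -> ~~ K q ->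
  (forall c, p < c < q -> K c) ->
  hecke_eq (two_row_word t n (mitosis_row K p) (mitosis_next_row K p))
           (two_row_word t n (mitosis_row K q) (mitosis_next_row K q)).
Proof.
move=> p0 pqn nKp nKq Kpq.
rewrite !mitosis_wordE //; try lia.
set m := q - p.+1; set Mid := down p.+1 m.
have eHi : down p.+1 (n - p) = down q.+1 (n - q) ++ q :: Mid.
  by rewrite (down_splitAt (x := q)) /Mid /m; [congr (down _ _ ++ _ :: down _ _)|]; lia.
have eLo : down 1 q.-1 = Mid ++ p :: down 1 p.-1.
  by rewrite (down_splitAt (x := p)) /Mid /m; [congr (down _ _ ++ _ :: down _ _)|]; lia.
have eMid : filter K Mid = Mid.
  by rewrite (@filter_down_eq _ predT) ?filter_predT // => c hc; apply: Kpq; lia.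
rewrite eHi eLo !filter_cat /= (negPf nKp) (negPf nKq) eMid !map_cat /= -!catA.
rewrite [map _ Mid]map_addn_down [map (fun c => (t + c).+1) Mid]map_addSn_down.
set B := t + p.+1.
have eTop : t + q :: down B m = down B m.+1 by rewrite downSr /B /m; congr (_ :: _); lia.
have eBot : down B.+1 m ++ (t + p).+1 :: map (fun c => (t + c).+1) (down 1 p.-1) =
    down B m.+1 ++ map (fun c => (t + c).+1) (down 1 p.-1).
  by rewrite downSl -catA /B addnS.
rewrite eBot eTop !catA; apply: hecke_eq_cat2r; rewrite -!catA; apply: hecke_eq_cat2l.
have := @hecke_down_pass B m (map (fun c => t + c) (filter K (down 1 p.-1)) ++
                                map (fun c => (t + c).+1) (filter K (down q.+1 (n - q)))).
rewrite -!catA; apply=> x y; rewrite mem_cat => /orP [] /mem_map_filter [c + ->];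
by rewrite !mem_down /B /m /distant; lia.
Qed.

Lemma mitosis_word_hecke_eq t n K p q : 0 < p <= n -> 0 < q <= n -> ~~ K p -> ~~ K q ->
  hecke_eq (two_row_word t n (mitosis_row K p) (mitosis_next_row K p))
           (two_row_word t n (mitosis_row K q) (mitosis_next_row K q)).
Proof.
move=> pn qn nKp nKq.
wlog pq : p q pn qn nKp nKq / p < q.
  move=> gen; case: (ltngtP p q) => [|qp|->] //; first exact: gen.
  exact/hecke_eq_sym/gen.
have [d] := ubnP (q - p); elim: d p q pn qn nKp nKq pq => [|d IH] p q pn qn nKp nKq pq qpd.
  by lia.
have [/hasP [r]|/hasPn allK] := boolP (has (predC K) (iota p.+1 (q - p.+1))).
  rewrite mem_iota => pr nKr.
  by apply: (@hecke_eq_trans (two_row_word t n (mitosis_row K r) (mitosis_next_row K r)));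
    apply: IH => //; lia.
apply: mitosis_word_step => //; try lia.
by move=> c pc; have := allK c; rewrite mem_iota /= negbK; apply; lia.
Qed.

(** * One-line codes *)

Lemma pv_nth s x : 0 < x <= size s -> pv s x = nth 0 s x.-1.
Proof. by rewrite /pv => ->. Qed.

Lemma pv_id s x : size s < x -> pv s x = x.
Proof. by rewrite /pv; case: ifP => //; lia. Qed.

Lemma pv_mkseq g N x : 0 < x <= N -> pv (mkseq g N) x = g x.-1.
Proof. by move=> xN; rewrite pv_nth ?size_mkseq // nth_mkseq //; lia. Qed.

Definition trimmed (s : seq nat) : bool := (s == [::]) || (last 0 s != size s).

Lemma trimn_spec n s : n <= size s -> exists k, [/\ k <= n, trimn n s = take k s,
  (k == 0) || (nth 0 s k.-1 != k) & forall j, k <= j < n -> nth 0 s j = j.+1].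
Proof.
elim: n => [|m IH] ms /=.
  by exists 0; split; rewrite ?take0 // => j; lia.
case: ifP => [/eqP sm|/negbT sm]; last by exists m.+1; split => //=; lia.
have [k [km -> k0 sk]] := IH (ltnW ms).
exists k; split => //; first lia.
move=> j kj; case: (ltnP j m) => jm; first by apply: sk; lia.
by have -> : j = m by lia.
Qed.

Lemma trim_spec s : [/\ trimmed (trim s), size (trim s) <= size s &
   forall x, pv (trim s) x = pv s x].
Proof.
have [k [ks tk k0 sk]] := trimn_spec (leqnn (size s)).
have size_k : size (take k s) = k by rewrite size_take; case: ltnP => //; lia.
rewrite /trim tk; split.
- rewrite /trimmed size_k; case: (posnP k) => [->|kp]; first by rewrite take0.
  apply/orP; right; rewrite -nth_last size_k nth_take; last by lia.
  by move: k0; rewrite (_ : (k == 0) = false) //=; lia.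
- by rewrite size_k.
move=> x; rewrite /pv size_k.
case: (posnP x) => [->|x0] //=.
case: (leqP x k) => xk /=.
  by rewrite nth_take; [have -> : x <= size s by lia | lia].
by case: (leqP x (size s)) => xs //=; rewrite sk //; lia.
Qed.

Lemma trimmed_pv_inj s1 s2 : trimmed s1 -> trimmed s2 -> pv s1 =1 pv s2 -> s1 = s2.
Proof.
have size_le s t : trimmed t -> pv s =1 pv t -> size t <= size s.
  rewrite /trimmed => ht st; case: (leqP (size t) (size s)) => // lt_st.
  move: ht; case: t st lt_st => [|y t] //= st lt_st.
  have := st (size t).+1; rewrite pv_id //= pv_nth /=; last by lia.
  by rewrite -[last y t]/(last 0 (y :: t)) -nth_last /= => <-; rewrite eqxx.
move=> t1 t2 e12; have e : size s1 = size s2.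
  by apply/eqP; rewrite eqn_leq !size_le.
apply: (@eq_from_nth _ 0) => // j js.
by have := e12 j.+1; rewrite !pv_nth //=; lia.
Qed.

Lemma pv_rmul u a x : 0 < a -> pv (rmul u a) x = pv u (sw a x).
Proof.
move=> a0; rewrite /rmul.
have [_ _ ->] := trim_spec (mkseq (fun k => pv u (sw a k.+1)) (maxn (size u) a.+1)).
case: (posnP x) => [->|x0]; first by rewrite swD //; lia.
case: (leqP x (maxn (size u) a.+1)) => xN; first by rewrite pv_mkseq ?x0 //= prednK.
by rewrite pv_id ?size_mkseq // swD ?pv_id //; lia.
Qed.

Lemma size_rmul u a : size (rmul u a) <= maxn (size u) a.+1.
Proof.
have [_ + _] := trim_spec (mkseq (fun k => pv u (sw a k.+1)) (maxn (size u) a.+1)).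
by rewrite size_mkseq.
Qed.

Definition perm_code (s : seq nat) : Prop := [/\ trimmed s,
  {in [pred x | 0 < x] &, injective (pv s)} & forall x, 0 < x -> 0 < pv s x].

Lemma perm_code_nil : perm_code [::].
Proof.
split => // [x y | x x0]; last by rewrite pv_id.
by rewrite !inE => x0 y0; rewrite !pv_id.
Qed.

Lemma perm_code_le s x : perm_code s -> 0 < x <= size s -> pv s x <= size s.
Proof.
case=> _ inj_s pos_s /andP [x0 xs]; case: (leqP (pv s x) (size s)) => // lt_sx.
have := inj_s x (pv s x) x0 (pos_s x x0); rewrite (pv_id lt_sx) => /(_ erefl); lia.
Qed.

Lemma perm_code_rmul u a : perm_code u -> 0 < a -> perm_code (rmul u a).
Proof.
case=> _ inj_u pos_u a0; split.
- by have [] := trim_spec (mkseq (fun k => pv u (sw a k.+1)) (maxn (size u) a.+1)).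
- move=> x y; rewrite !inE !pv_rmul // => x0 y0 e.
  have e' : sw a x = sw a y by apply: inj_u e; rewrite inE sw_gt0.
  by rewrite -(swK a x) e' swK.
by move=> x x0; rewrite pv_rmul // pos_u // sw_gt0.
Qed.

Lemma rmulK u a : perm_code u -> 0 < a -> rmul (rmul u a) a = u.
Proof.
move=> cu a0; have cr := perm_code_rmul cu a0.
have [t1 _ _] := perm_code_rmul cr a0; have [t2 _ _] := cu.
by apply: trimmed_pv_inj => // x; rewrite !pv_rmul // swK.
Qed.

(** * Length and the Demazure product *)

Definition inversions (f : nat -> nat) (N : nat) : nat :=
  \sum_(0 <= x < N.+1) \sum_(0 <= y < N.+1) ((0 < x) && (x < y) && (f y < f x)).

Lemma inversionsE f N : inversions f N =
  \sum_(x < N.+1) \sum_(y < N.+1) ((0 < x) && (x < y) && (f y < f x)).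
Proof. by rewrite /inversions big_mkord; apply: eq_bigr => x _; rewrite big_mkord. Qed.

Lemma count_sum (T : Type) (P : pred T) (l : seq T) : count P l = \sum_(x <- l) P x.
Proof. by elim: l => [|x l IH]; rewrite ?big_nil ?big_cons //= IH. Qed.

Lemma sum_ord_indicator b a N : a < N -> \sum_(y < N) (b && (y == a :> nat)) = b.
Proof.
move=> aN; case: b => /=; last by rewrite big1.
rewrite -(big_mkord xpredT (fun y => (y == a : nat))) -count_sum.
by rewrite count_uniq_mem ?iota_uniq // mem_iota add0n subn0 aN.
Qed.

Lemma inversions_sw f N a : 0 < a -> a.+1 <= N -> f a < f a.+1 ->
  inversions (fun x => f (sw a x)) N = (inversions f N).+1.
Proof.
move=> a0 aN fa.
pose h (x : 'I_N.+1) : 'I_N.+1 := Ordinal (sw_ltn (ltn_ord x) aN).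
have hK : involutive h by move=> x; apply: val_inj; rewrite /= swK.
rewrite !inversionsE (reindex_inj (inv_inj hK)).
under eq_bigr => x _ do rewrite (reindex_inj (inv_inj hK)).
rewrite /h /=.
have swap_inv (x y : 'I_N.+1) :
  ((0 < sw a x) && (sw a x < sw a y) && (f (sw a (sw a y)) < f (sw a (sw a x))) : nat) =
  ((0 < x) && (x < y) && (f y < f x)) + ((x == a.+1 :> nat) && (y == a :> nat)).
  rewrite !swK; case: (swP a x) => [[-> ->]|[-> ->]|[? ? ->]];
  by case: (swP a y) => [[-> ->]|[-> ->]|[? ? ->]]; rewrite ?eqxx /=;
     do ? case: ifP => //=; lia.
under eq_bigr => x _ do under eq_bigr => y _ do rewrite swap_inv.
have aN1 : a < N.+1 by lia.
under eq_bigr => x _ do rewrite big_split /= sum_ord_indicator //.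
rewrite big_split /= -[RHS]addn1; congr (_ + _).
by apply: (sum_ord_indicator true); lia.
Qed.

Lemma big1_nat (R : Type) (idx : R) (op : Monoid.law idx) m n (F : nat -> R) :
  (forall i, m <= i < n -> F i = idx) -> \big[op/idx]_(m <= i < n) F i = idx.
Proof. by move=> F0; rewrite big_nat_cond big1 // => i /andP [+ _]; exact: F0. Qed.

Lemma len_inversions s N : size s <= N ->
  (forall x, 0 < x <= size s -> pv s x <= size s) -> len s = inversions (pv s) N.
Proof.
move=> sN s_le; set n := size s.
have -> : len s = \sum_(0 <= j < n) \sum_(0 <= i < j) (nth 0 s j < nth 0 s i).
  rewrite /len sumnE big_map /index_iota subn0; apply: eq_bigr => j _.
  by rewrite count_sum subn0.
rewrite /inversions exchange_big_nat; symmetry.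
rewrite big_ltn //= [X in X + _]big1_nat; last by move=> x _; rewrite andbF.
rewrite add0n (@big_cat_nat _ _ _ n.+1) //= [X in _ + X]big1_nat ?addn0; last first.
  move=> y ny; apply: big1_nat => x xy.
  rewrite (pv_id (_ : n < y)); last by lia.
  case: (leqP x n) => xn; last by rewrite (pv_id xn); apply/eqP; rewrite eqb0; apply/negP; lia.
  case: (posnP x) => [->|x0] //=.
  by have := s_le x; rewrite x0 xn => /(_ isT) ?; apply/eqP; rewrite eqb0; apply/negP; lia.
rewrite big_add1 /=; apply: eq_big_nat => j jn.
rewrite big_ltn //= add0n (@big_cat_nat _ _ _ j.+1) //=; last by lia.
rewrite [X in _ + X]big1_nat ?addn0; last by move=> x ?; apply/eqP; rewrite eqb0; apply/negP; lia.
rewrite big_add1 /=; apply: eq_big_nat => i ij.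
rewrite !pv_nth /=; [|lia|lia].
by congr nat_of_bool; apply/idP/idP; [case/andP|move=> ->; rewrite andbT; lia].
Qed.

Lemma len_rmul u a : perm_code u -> 0 < a -> pv u a < pv u a.+1 ->
  len (rmul u a) = (len u).+1.
Proof.
move=> cu a0 lt_a; set N := maxn (size u) a.+1.
have cr := perm_code_rmul cu a0.
rewrite (@len_inversions u N) ?leq_maxl //; last by move=> x ?; apply: perm_code_le.
rewrite (@len_inversions _ N) ?size_rmul //; last by move=> x ?; apply: perm_code_le.
have -> : pv (rmul u a) = (fun x => pv u (sw a x)).
  by apply: functional_extensionality => x; rewrite pv_rmul.
by rewrite inversions_sw // leq_maxr.
Qed.

Lemma dstarE u a : perm_code u -> 0 < a ->
  perm_code (dstar u a) /\ pv (dstar u a) = hecke_step (pv u) a.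
Proof.
move=> cu a0; rewrite /dstar /hecke_step.
have cr := perm_code_rmul cu a0.
case: (ltnP (pv u a) (pv u a.+1)) => lt_a.
  rewrite len_rmul // eqxx; split=> //.
  by apply: functional_extensionality => x; rewrite pv_rmul.
have : pv (rmul u a) a < pv (rmul u a) a.+1.
  rewrite !pv_rmul // swL swR ltn_neqAle lt_a andbT; apply/negP => /eqP e.
  by case: cu => _ inj_u _; have := inj_u _ _ (ltn0Sn a) a0 e; lia.
move=> /(len_rmul cr a0); rewrite rmulK // => len_u.
by rewrite len_u (_ : (_ == _) = false) //; lia.
Qed.

Lemma demazure_word_spec l : all (leq 1) l ->
  perm_code (foldl dstar [::] l) /\ pv (foldl dstar [::] l) = hecke_act (pv [::]) l.
Proof.
elim/last_ind: l => [|l a IH]; first by split; [exact: perm_code_nil|].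
rewrite all_rcons => /andP [a0 /IH [cl el]].
by rewrite foldl_rcons /hecke_act foldl_rcons -/(hecke_act _ _) -el; apply: dstarE.
Qed.

Lemma demazure_word_hecke_eq l1 l2 : all (leq 1) l1 -> all (leq 1) l2 ->
  hecke_eq l1 l2 -> foldl dstar [::] l1 = foldl dstar [::] l2.
Proof.
move=> /demazure_word_spec [c1 e1] /demazure_word_spec [c2 e2] l12.
have [t1 _ _] := c1; have [t2 _ _] := c2.
by apply: trimmed_pv_inj => // x; rewrite e1 e2 l12.
Qed.

Lemma foldr_maxn_ge s x : x \in s -> x <= foldr maxn 0 s.
Proof.
elim: s => [|y s IH] //=; rewrite inE leq_max => /orP [/eqP ->|/IH ->];
by rewrite ?leqnn ?orbT.
Qed.

Lemma foldr_maxn_le s B : {in s, forall x, x <= B} -> foldr maxn 0 s <= B.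
Proof.
elim: s => [|y s IH] //= sB; rewrite geq_max sB ?mem_head //=.
by apply: IH => x xs; apply: sB; rewrite inE xs orbT.
Qed.

Lemma maxrow_ge (X : seq (nat * nat)) x : x \in X -> x.1 <= maxrow X.
Proof. by move=> xX; apply/foldr_maxn_ge/map_f. Qed.

Lemma maxcol_ge (X : seq (nat * nat)) x : x \in X -> x.2 <= maxcol X.
Proof. by move=> xX; apply/foldr_maxn_ge/map_f. Qed.

Lemma maxrow_le (X : seq (nat * nat)) B : {in X, forall x, x.1 <= B} -> maxrow X <= B.
Proof. by move=> XB; apply: foldr_maxn_le => _ /mapP [x xX ->]; apply: XB. Qed.

Lemma maxcol_le (X : seq (nat * nat)) B : {in X, forall x, x.2 <= B} -> maxcol X <= B.
Proof. by move=> XB; apply: foldr_maxn_le => _ /mapP [x xX ->]; apply: XB. Qed.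

Definition row_word (X : seq (nat * nat)) (r M : nat) : seq nat :=
  [seq r + c - 1 | c <- down 1 M & (r, c) \in X].

Definition rows_word (X : seq (nat * nat)) (a k M : nat) : seq nat :=
  flatten [seq row_word X r M | r <- iota a k].

Definition row_tail (X : seq (nat * nat)) (r M n : nat) : seq nat :=
  [seq r + c - 1 | c <- down n.+1 (M - n) & (r, c) \in X].

Lemma row_word_maxcol X r M : maxcol X <= M -> row_word X r M = row_word X r (maxcol X).
Proof.
move=> XM; rewrite /row_word (_ : M = maxcol X + (M - maxcol X)); last by lia.
rewrite down_cat filter_cat (@filter_down_eq _ pred0) ?filter_pred0 // => c cM.
by apply/negbTE/negP => /maxcol_ge /=; lia.
Qed.

Lemma row_word_maxrow X r M : maxrow X < r -> row_word X r M = [::].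
Proof.
move=> Xr; rewrite /row_word (@filter_down_eq _ pred0) ?filter_pred0 // => c _.
by apply/negbTE/negP => /maxrow_ge /=; lia.
Qed.

Lemma reading_wordE X R M : maxrow X <= R -> maxcol X <= M ->
  reading_word X = rows_word X 1 R M.
Proof.
move=> XR XM; rewrite /rows_word (_ : R = maxrow X + (R - maxrow X)); last by lia.
rewrite iotaD map_cat flatten_cat (_ : flatten [seq _ | r <- iota (1 + _) _] = [::]).
  by rewrite cats0; congr flatten; apply: eq_map => r; rewrite row_word_maxcol.
have : maxrow X < 1 + maxrow X by lia.
elim: (R - maxrow X) (1 + maxrow X) => [|k IH] r Xr //=.
by rewrite row_word_maxrow ?IH //; lia.
Qed.

Lemma reading_word_gt0 X : all (leq 1) (reading_word X).
Proof.
apply/allP => a /flattenP [l /mapP [r + ->]] /mapP [c +  ->].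
by rewrite mem_iota mem_filter mem_rev mem_iota; lia.
Qed.

Lemma rows_word_split X R M i : 0 < i -> i < R ->
  rows_word X 1 R M = rows_word X 1 i.-1 M ++ row_word X i M ++ row_word X i.+1 M ++
                      rows_word X i.+2 (R - i.+1) M.
Proof.
move=> i0 iR; rewrite /rows_word {1}(_ : R = i.-1 + (2 + (R - i.+1))); last by lia.
rewrite iotaD (iotaD _ 2) !map_cat !flatten_cat /= cats0 -!catA.
by rewrite add1n prednK // addn2.
Qed.

Lemma row_word_split (X : seq (nat * nat)) (r M n : nat) (P : pred nat) : 0 < r -> n <= M ->
  (forall c, 0 < c <= n -> ((r, c) \in X) = P c) ->
  row_word X r M = row_tail X r M n ++ map (fun c => r.-1 + c) (filter P (down 1 n)).
Proof.
move=> r0 nM XP; rewrite /row_word {1}(_ : M = n + (M - n)); last by lia.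
rewrite down_cat filter_cat map_cat add1n (@filter_down_eq _ P 1 n); last first.
  by move=> c cn; apply: XP; lia.
by congr (_ ++ _); apply/eq_in_map => c; rewrite mem_filter mem_down => /andP [_ ?]; lia.
Qed.

(* The letters of rows i, i+1 in the columns <= n commute with the rest of row i+1. *)
Lemma reading_word_two_rows (X : seq (nat * nat)) (R M i n : nat) (P Q : pred nat) :
  0 < i -> i < R -> n <= M -> maxrow X <= R -> maxcol X <= M ->
  (forall c, 0 < c <= n -> ((i, c) \in X) = P c) ->
  (forall c, 0 < c <= n -> ((i.+1, c) \in X) = Q c) ->
  hecke_eq (reading_word X)
    (rows_word X 1 i.-1 M ++ row_tail X i M n ++ row_tail X i.+1 M n ++
     two_row_word i.-1 n P Q ++ rows_word X i.+2 (R - i.+1) M).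
Proof.
move=> i0 iR nM XR XM XP XQ.
rewrite (reading_wordE XR XM) (rows_word_split _ _ i0 iR).
rewrite (row_word_split i0 nM XP) (row_word_split (ltn0Sn i) nM XQ) /two_row_word -!catA.
have -> : map (fun c => i.+1.-1 + c) (filter Q (down 1 n)) =
          map (fun c => (i.-1 + c).+1) (filter Q (down 1 n)).
  by apply: eq_map => c /=; lia.
apply/hecke_eq_cat2l/hecke_eq_cat2l; rewrite !catA; do 2 apply: hecke_eq_cat2r.
apply: hecke_comm_cat => x y /mem_map_filter [c + ->] /mapP [d +  ->].
by rewrite mem_down mem_filter mem_down /distant; lia.
Qed.

(** * Mitosis *)

Lemma mem_before_start i D c : 0 < c < start i D -> (i, c) \in D.
Proof.
case/andP=> c0; rewrite /start; set s := iota 0 (size D).+1 => cs.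
have lt_c : c.-1 < find (fun k => (i, k.+1) \notin D) s by lia.
have := before_find 0 lt_c; rewrite nth_iota; last first.
  by have := find_size (fun k => (i, k.+1) \notin D) s; rewrite size_iota; lia.
by rewrite add0n prednK // => /negbFE.
Qed.

Definition row_pred (D : seq (nat * nat)) (r : nat) : pred nat := fun c => (r, c) \in D.

Lemma mem_Jset i D c :
  (c \in Jset i D) = (0 < c <= (start i D).-1) && ~~ row_pred D i.+1 c.
Proof. by rewrite /Jset mem_filter mem_iota andbC add1n prednK. Qed.

Lemma mem_Dp i D p x : (x \in Dp i D p) =
  ((x \in D) && (x != (i, p)) && ~~ [&& x.1 == i, x.2 \in Jset i D & x.2 < p]) ||
  [&& x.1 == i.+1, x.2 \in Jset i D & x.2 < p].
Proof.
rewrite /Dp mem_cat mem_filter andbA; congr orb; first by rewrite andbC andbA.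
case: x => r c /=; apply/mapP/idP.
  by case=> d; rewrite mem_filter => /andP [dp dJ] [-> ->]; rewrite eqxx dJ dp.
by case/and3P => /eqP -> cJ cp; exists c; rewrite // mem_filter cJ cp.
Qed.

Lemma mem_Dp_row i D (p c : nat) : p \in Jset i D -> 0 < c ->
  ((i, c) \in Dp i D p) =
  if c <= (start i D).-1 then mitosis_row (row_pred D i.+1) p c else (i, c) \in D.
Proof.
move=> Jp c0; have Dc : c <= (start i D).-1 -> (i, c) \in D.
  by move=> cn; apply: mem_before_start; lia.
move: Jp; rewrite mem_Dp !mem_Jset /mitosis_row /row_pred.
set n := (start i D).-1 in Dc *; clearbody n => /andP [pn nKp] /=.
rewrite eqxx (_ : (i == i.+1) = false) ?andbF ?orbF 1?xpair_eqE ?eqxx /=; last by lia.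
case: ifP => cn; last by rewrite (_ : (c != p) = true) ?andbT ?andbF //; lia.
rewrite Dc ?c0 //=.
by move: nKp; case: ((i.+1, c) \in D); case: ((i.+1, p) \in D) => //=; lia.
Qed.

Lemma mem_Dp_next_row i D (p c : nat) : p \in Jset i D -> 0 < c ->
  ((i.+1, c) \in Dp i D p) =
  if c <= (start i D).-1 then mitosis_next_row (row_pred D i.+1) p c else (i.+1, c) \in D.
Proof.
move=> Jp c0; move: Jp; rewrite mem_Dp !mem_Jset /mitosis_next_row /row_pred.
set n := (start i D).-1; clearbody n => /andP [pn nKp] /=.
rewrite eqxx xpair_eqE (_ : (i.+1 == i) = false) /= ?andbT; last by lia.
case: ifP => cn; rewrite ?c0 ?andbF ?orbF //=.
by case: ((i.+1, c) \in D) => /=; rewrite ?orbT //; lia.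
Qed.

Lemma mem_Dp_other_row i D p r c : r != i -> r != i.+1 ->
  ((r, c) \in Dp i D p) = ((r, c) \in D).
Proof.
move=> ri ri1; rewrite mem_Dp /= (negPf ri) (negPf ri1) /= xpair_eqE (negPf ri) /=.
by rewrite !andbT orbF.
Qed.

Lemma start_le_maxcol i D : (start i D).-1 <= maxcol D.
Proof.
case: (posnP (start i D).-1) => [->|n0] //.
by apply: (@maxcol_ge D (i, (start i D).-1)); apply: mem_before_start; lia.
Qed.

Lemma maxrow_Dp i D (p : nat) : maxrow (Dp i D p) <= maxn (maxrow D) i.+1.
Proof.
apply: maxrow_le => x; rewrite mem_Dp => /orP [/andP [/andP [xD _] _]|/and3P [/eqP -> _ _]].
  exact: leq_trans (maxrow_ge xD) (leq_maxl _ _).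
exact: leq_maxr.
Qed.

Lemma maxcol_Dp i D (p : nat) : maxcol (Dp i D p) <= maxcol D.
Proof.
apply: maxcol_le => x; rewrite mem_Dp => /orP [/andP [/andP [xD _] _]|/and3P [_ + _]].
  exact: maxcol_ge.
by rewrite mem_Jset => /andP [/andP [_ cn] _]; apply: leq_trans cn (start_le_maxcol i D).
Qed.

(* The reading word of D, up to commutations, with its letters from rows i, i+1 and
   columns < start_i(D) replaced by w. *)
Definition frame_word (D : seq (nat * nat)) (i : nat) (w : seq nat) : seq nat :=
  let M := maxcol D in let n := (start i D).-1 in
  rows_word D 1 i.-1 M ++ row_tail D i M n ++ row_tail D i.+1 M n ++ w ++
  rows_word D i.+2 (maxn (maxrow D) i.+1 - i.+1) M.

Lemma frame_word_hecke_eq D i w1 w2 :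
  hecke_eq w1 w2 -> hecke_eq (frame_word D i w1) (frame_word D i w2).
Proof. by move=> w12; do 3 apply: hecke_eq_cat2l; apply: hecke_eq_cat2r. Qed.

Lemma reading_word_frame i D : 0 < i ->
  hecke_eq (reading_word D)
    (frame_word D i (two_row_word i.-1 (start i D).-1 predT (row_pred D i.+1))).
Proof.
move=> i0; apply: reading_word_two_rows => //; rewrite ?leq_maxl ?leq_maxr ?start_le_maxcol //.
by move=> c cn; apply: mem_before_start; lia.
Qed.

Lemma reading_word_Dp_frame i D (p : nat) : 0 < i -> p \in Jset i D ->
  hecke_eq (reading_word (Dp i D p))
    (frame_word D i (two_row_word i.-1 (start i D).-1
       (mitosis_row (row_pred D i.+1) p) (mitosis_next_row (row_pred D i.+1) p))).
Proof.
move=> i0 Jp; rewrite /frame_word.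
set M := maxcol D; set n := (start i D).-1; set K := row_pred D i.+1.
have rowsE a k : (i.+1 < a) || (a + k <= i) ->
    rows_word D a k M = rows_word (Dp i D p) a k M.
  move=> ak; rewrite /rows_word; congr flatten; apply/eq_in_map => r; rewrite mem_iota => ra.
  by rewrite /row_word; congr map; apply: eq_filter => c; rewrite mem_Dp_other_row //; lia.
have tail_i : row_tail D i M n = row_tail (Dp i D p) i M n.
  rewrite /row_tail; congr map; apply: eq_in_filter => c; rewrite mem_down => cn.
  by rewrite mem_Dp_row; [rewrite (_ : c <= n = false) //; lia | |lia].
have tail_i1 : row_tail D i.+1 M n = row_tail (Dp i D p) i.+1 M n.
  rewrite /row_tail; congr map; apply: eq_in_filter => c; rewrite mem_down => cn.
  by rewrite mem_Dp_next_row; [rewrite (_ : c <= n = false) //; lia | |lia].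
rewrite tail_i tail_i1 (rowsE 1 i.-1) ?(rowsE i.+2); try lia.
apply: reading_word_two_rows; rewrite ?leq_maxr ?maxrow_Dp ?maxcol_Dp ?start_le_maxcol //.
- by move=> c /andP [c0 cn]; rewrite mem_Dp_row // cn.
by move=> c /andP [c0 cn]; rewrite mem_Dp_next_row // cn.
Qed.

Lemma frame_word_rcons D i w :
  hecke_eq (frame_word D i (w ++ [:: i])) (frame_word D i w ++ [:: i]).
Proof.
rewrite /frame_word -!catA; do 4 apply: hecke_eq_cat2l.
apply: hecke_comm_letter => y /flattenP [l /mapP [r + ->]] /mapP [c + ->].
by rewrite mem_iota mem_filter mem_down /distant; lia.
Qed.

Lemma reading_word_mitosis i D (p : nat) : 0 < i -> p \in Jset i D ->
  hecke_eq (reading_word D) (reading_word (Dp i D p) ++ [:: i]).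
Proof.
move=> i0 Jp; apply: hecke_eq_trans (reading_word_frame D i0) _.
apply: hecke_eq_trans _ (hecke_eq_cat2r _ (hecke_eq_sym (reading_word_Dp_frame i0 Jp))).
move: Jp; rewrite mem_Jset => /andP [pn nKp].
apply: hecke_eq_trans (frame_word_rcons D i _).
by have := two_row_word_mitosis i.-1 pn nKp; rewrite prednK // => /frame_word_hecke_eq; apply.
Qed.

Lemma reading_word_mitosis_eq i D (p q : nat) : 0 < i -> p \in Jset i D -> q \in Jset i D ->
  hecke_eq (reading_word (Dp i D p)) (reading_word (Dp i D q)).
Proof.
move=> i0 Jp Jq; apply: hecke_eq_trans (reading_word_Dp_frame i0 Jp) _.
apply: hecke_eq_trans _ (hecke_eq_sym (reading_word_Dp_frame i0 Jq)).
move: Jp Jq; rewrite !mem_Jset => /andP [pn nKp] /andP [qn nKq].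
exact/frame_word_hecke_eq/mitosis_word_hecke_eq.
Qed.

Lemma perm_code_demazure D : perm_code (demazure D).
Proof. by have [] := demazure_word_spec (reading_word_gt0 D). Qed.

Lemma demazure_mitosis_eq i D (p q : nat) : 0 < i -> p \in Jset i D -> q \in Jset i D ->
  demazure (Dp i D p) = demazure (Dp i D q).
Proof.
move=> i0 Jp Jq; apply: demazure_word_hecke_eq; rewrite ?reading_word_gt0 //.
exact: reading_word_mitosis_eq.
Qed.

Lemma demazure_mitosis i D (p : nat) : 0 < i -> p \in Jset i D ->
  demazure D = dstar (demazure (Dp i D p)) i.
Proof.
move=> i0 Jp; rewrite /demazure -foldl_rcons -cats1.
apply: demazure_word_hecke_eq; rewrite ?all_cat /= ?reading_word_gt0 ?i0 //.
exact: reading_word_mitosis.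
Qed.

Unset Implicit Arguments.

Theorem theorem2p3 (w : seq nat) (i : nat) (D : seq (nat * nat)) :
  is_sinf w -> 0 < i -> (len (rmul w i)).+1 = len w ->
  pipe_dream D -> demazure D = w ->
  mitosis i D <> [::] ->
  (forall E, E \in mitosis i D -> demazure E = rmul w i) \/
  (forall E, E \in mitosis i D -> demazure E = w).
Proof.
move=> _ i0 _ _ <-; rewrite /mitosis.
case Ji: (Jset i D) => [//|p J] _; have Jp : p \in Jset i D by rewrite Ji mem_head.
have dE E : E \in [seq Dp i D q | q <- p :: J] -> demazure E = demazure (Dp i D p).
  by case/mapP => q; rewrite -Ji => Jq ->; apply: demazure_mitosis_eq.
rewrite (demazure_mitosis i0 Jp) /dstar; case: ifP => _; [left|right] => E /dE -> //.
by rewrite rmulK //; exact: perm_code_demazure.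
Qed.
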